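(* Assume AM defends every real machine, i.e. $d_r=e_r$ for all $r\in\mathcal M$. Let $\pi^*$ be the AM strategy that emulates the machine being defended: $\pi^{*r}_r=1$ and $\pi^{*r}_m=0$ for $m\neq r$, for every $r\in\mathcal M$. Then: (i) the M strategy $\rho$ with $\rho_m=\tfrac12$ for all $m$ is a best response to $\pi^*$, and $\max_{\rho\in[0,1]^{\mathcal M}}u_M(\pi^*,\rho)=\tfrac14$, so $u_{AM}(\pi^*,\rho)=\tfrac34$ for every best response $\rho$ to $\pi^*$; (ii) for every AM strategy $\pi$ (not necessarily naive) and every best response $\rho$ of M to $\pi$, $u_{AM}(\pi,\rho)\le\tfrac34$. Consequently $\pi^*$, together with a best response of M, is an AM-optimal equilibrium among all AM strategies.
   Context: Let $\mathcal M$ be a finite nonempty set of machine (environment) types. Let $e\in[0,1]^{\mathcal M}$ with $\sum_{r\in\mathcal M}e_r=1$ ($e_r$ is the fraction of all real machines that are of type $r$), and $d\in[0,1]^{\mathcal M}$ with $0\le d_r\le e_r$ ($d_r$ is the fraction of all real machines that are of type $r$ and defended by the anti-malware AM); put $D=\sum_{r}d_r$. An AM strategy $\pi$ assigns to each real machine type $r\in\mathcal M$ a vector $\pi^r\in[0,1]^{\mathcal M}$ with $\sum_{m}\pi^r_m\le 1$ ($\pi^r_m$ is the probability that AM creates a sandbox of type $m$ on a defended real machine of type $r$; with probability $1-\sum_m\pi^r_m$ no sandbox is created). AM's strategy is naive if $\pi^r$ does not depend on $r$; then we write $\pi_m$ for $\pi^r_m$. A malware (M) strategy is a vector $\rho\in[0,1]^{\mathcal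 M}$ ($\rho_m$ is the probability M attacks when it perceives environment $m$). The utilities are $$u_M(\pi,\rho)=\sum_{r\in\mathcal M}\Big[(e_r-d_r)\rho_r+d_r\Big(1-\sum_{m\in\mathcal M}\pi^r_m\rho_m\Big)\rho_r\Big],$$ $$u_{AM}(\pi,\rho)=\sum_{r\in\mathcal M}d_r\Big[\sum_{m\in\mathcal M}\big(\pi^r_m\rho_m+\pi^r_m(1-\rho_m)(1-\rho_r)\big)+\Big(1-\sum_{m\in\mathcal M}\pi^r_m\Big)(1-\rho_r)\Big].$$ A best response of M to $\pi$ is any $\rho\in\arg\max_{\hat\rho\in[0,1]^{\mathcal M}}u_M(\pi,\hat\rho)$. A pair $(\pi,\rho)$ with $\rho$ a best response to $\pi$ is an equilibrium; it is AM-optimal within a class of AM strategies if $\pi$ lies in the class and $u_{AM}(\pi,\rho)\ge u_{AM}(\pi',\rho')$ for every equilibrium $(\pi',\rho')$ with $\pi'$ in the class. *)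

From HB Require Import structures.
From mathcomp Require Import all_boot all_order all_algebra.
From mathcomp Require Import reals.
Set Implicit Arguments. Unset Strict Implicit. Unset Printing Implicit Defensive.
Import Order.TTheory GRing.Theory Num.Theory.
Local Open Scope ring_scope.

Section Game.
Variables (R : realType) (M : finType).

(* pi r m : probability AM creates a sandbox of type m on a defended real machine of type r *)
Definition AM_strategy := M -> M -> R.
(* rho m : probability M attacks when perceiving environment m *)
Definition M_strategy := M -> R.

Definition valid_AM (pi : AM_strategy) : Prop :=
  (forall r m, 0 <= pi r m <= 1) /\ (forall r, \sum_(m : M) pi r m <= 1).

Definition naive (pi : AM_strategy) : Prop := forall r r' m, pi r m = pi r' m.

Definition valid_M (rho : M_strategy) : Prop := forall m, 0 <= rho m <= 1.

Definition u_M (e d : M -> R) (pi : AM_strategy) (rho : M_strategy) : R :=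
  \sum_(r : M) ((e r - d r) * rho r
                + d r * (1 - \sum_(m : M) pi r m * rho m) * rho r).

Definition u_AM (d : M -> R) (pi : AM_strategy) (rho : M_strategy) : R :=
  \sum_(r : M) d r * (\sum_(m : M) (pi r m * rho m + pi r m * (1 - rho m) * (1 - rho r))
                      + (1 - \sum_(m : M) pi r m) * (1 - rho r)).

Definition best_response (e d : M -> R) (pi : AM_strategy) (rho : M_strategy) : Prop :=
  valid_M rho /\ forall rho', valid_M rho' -> u_M e d pi rho' <= u_M e d pi rho.

Definition equilibrium (e d : M -> R) (pi : AM_strategy) (rho : M_strategy) : Prop :=
  best_response e d pi rho.

Definition AM_optimal (C : AM_strategy -> Prop) (e d : M -> R)
    (pi : AM_strategy) (rho : M_strategy) : Prop :=
  C pi /\ equilibrium e d pi rho /\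
  forall pi' rho', C pi' -> equilibrium e d pi' rho' -> u_AM d pi' rho' <= u_AM d pi rho.

Definition pi_star : AM_strategy := fun r m => if m == r then 1 else 0.

End Game.

From HB Require Import structures.
From mathcomp Require Import all_boot all_order all_algebra.
From mathcomp Require Import reals.
From mathcomp Require Import ring lra.
From Stdlib Require Import FunctionalExtensionality.
Import Order.TTheory GRing.Theory Num.Theory.
Local Open Scope ring_scope.

(* When every machine is defended and the fractions [e] sum to 1, the game is
   zero-sum: u_AM = 1 - u_M.  Against the emulating strategy pi_star, a
   machine of type r yields M the payoff e_r rho_r (1 - rho_r) <= e_r / 4, so
   M gets at most 1/4, with equality at rho = 1/2.  Conversely, against any
   strategy pi, playing rho = 1/2 guarantees M at least
   e_r (1 - sum_m pi^r_m / 2) / 2 >= e_r / 4 on type r, hence 1/4 in total;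
   so any best response leaves AM at most 3/4. *)

Section FullDefense.
Variables (R : realType) (M : finType).
Implicit Types (e : M -> R) (pi : AM_strategy R M) (rho : M_strategy R M).

Lemma u_AM_full_defense e pi rho :
  \sum_(r : M) e r = 1 -> u_AM e pi rho = 1 - u_M e e pi rho.
Proof.
move=> He1; rewrite -{1}He1 /u_M -sumrB; apply: eq_bigr => r _.
have -> : \sum_(m : M) (pi r m * rho m + pi r m * (1 - rho m) * (1 - rho r))
   = (1 - rho r) * \sum_(m : M) pi r m + rho r * \sum_(m : M) pi r m * rho m.
  by rewrite !mulr_sumr -big_split /=; apply: eq_bigr => m _; ring.
ring.
Qed.

Lemma sum_pi_star_mul rho r : \sum_(m : M) @pi_star R M r m * rho m = rho r.
Proof.
rewrite (bigD1 r) //= big1 /pi_star ?eqxx ?mul1r ?addr0 // => m /negbTE ->.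
by rewrite mul0r.
Qed.

Lemma sum_pi_star r : \sum_(m : M) @pi_star R M r m = 1.
Proof. by rewrite (bigD1 r) //= big1 /pi_star ?eqxx ?addr0 // => m /negbTE ->. Qed.

Lemma valid_AM_pi_star : valid_AM (@pi_star R M).
Proof.
split=> [r m|r]; last by rewrite sum_pi_star.
by rewrite /pi_star; case: (m == r); rewrite ?lexx ?ler01.
Qed.

Lemma u_M_pi_star e rho :
  u_M e e (@pi_star R M) rho = \sum_(r : M) e r * (rho r * (1 - rho r)).
Proof. by apply: eq_bigr => r _; rewrite sum_pi_star_mul; ring. Qed.

Lemma u_M_pi_star_le e rho : (forall r, 0 <= e r) ->
  u_M e e (@pi_star R M) rho <= (\sum_(r : M) e r) / 4.
Proof.
move=> He0; rewrite u_M_pi_star mulr_suml; apply: ler_sum => r _.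
have := mulr_ge0 (He0 r) (sqr_ge0 (rho r - 2^-1)); nra.
Qed.

Lemma u_M_pi_star_half e :
  u_M e e (@pi_star R M) (fun _ => 2^-1) = (\sum_(r : M) e r) / 4.
Proof. by rewrite u_M_pi_star mulr_suml; apply: eq_bigr => r _; lra. Qed.

Lemma u_M_half_ge e pi : (forall r, 0 <= e r) -> valid_AM pi ->
  (\sum_(r : M) e r) / 4 <= u_M e e pi (fun _ => 2^-1).
Proof.
move=> He0 [_ pi_sum_le1]; rewrite mulr_suml; apply: ler_sum => r _.
rewrite subrr mul0r add0r -mulr_suml.
have pi_slack : 0 <= 1 - \sum_m pi r m by rewrite subr_ge0 pi_sum_le1.
have := mulr_ge0 (He0 r) pi_slack; lra.
Qed.

Lemma valid_M_half : valid_M (fun _ : M => 2^-1 : R).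
Proof. by move=> m; lra. Qed.

End FullDefense.

Theorem theorem2 (R : realType) (M : finType) (e d : M -> R)
  (He0 : forall r, 0 <= e r) (He1 : \sum_(r : M) e r = 1)
  (Hd : forall r, d r = e r) :
  (best_response e d (@pi_star R M) (fun _ => 2^-1)
   /\ (forall rho, valid_M rho -> u_M e d (@pi_star R M) rho <= 4^-1)
   /\ u_M e d (@pi_star R M) (fun _ => 2^-1) = 4^-1
   /\ (forall rho, best_response e d (@pi_star R M) rho ->
         u_AM d (@pi_star R M) rho = 3 / 4))
  /\ (forall pi rho, valid_AM pi -> best_response e d pi rho -> u_AM d pi rho <= 3 / 4)
  /\ (valid_AM (@pi_star R M)
      /\ exists rho, AM_optimal (@valid_AM R M) e d (@pi_star R M) rho).
Proof.
have -> : d = e by apply: functional_extensionality.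
have star_le rho : u_M e e (@pi_star R M) rho <= 4^-1.
  by have := @u_M_pi_star_le R M e rho He0; rewrite He1 div1r.
have star_half : u_M e e (@pi_star R M) (fun _ => 2^-1) = 4^-1.
  by rewrite u_M_pi_star_half He1 div1r.
have star_br : best_response e e (@pi_star R M) (fun _ => 2^-1).
  by split=> [|rho _]; [exact: valid_M_half | rewrite star_half].
have star_value rho : best_response e e (@pi_star R M) rho ->
    u_AM e (@pi_star R M) rho = 3 / 4.
  move=> [_ rho_max]; have := rho_max _ (valid_M_half R M).
  rewrite u_AM_full_defense // star_half; have := star_le rho; lra.
have AM_le pi rho : valid_AM pi -> best_response e e pi rho ->
    u_AM e pi rho <= 3 / 4.
  move=> pi_valid [_ rho_max]; have := rho_max _ (valid_M_half R M).
  have := @u_M_half_ge R M e pi He0 pi_valid; rewrite u_AM_full_defense // He1; lra.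
have star_valid := valid_AM_pi_star R M.
do !split=> //; exists (fun _ => 2^-1); split=> //; split=> //.
by move=> pi' rho' pi'_valid rho'_br; rewrite (star_value _ star_br) AM_le.
Qed.
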